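(* Let $\mathcal{K}=\{1,\dots,K\}$ and $\mathcal{N}=\{1,\dots,N\}$, and let all constants be as described in the context. For each $k\in\mathcal{K}$ let $k'\in\arg\max_{n\in\mathcal{N}} g_{k,n}$. Consider problem (P1): maximize over $\{p_n\},\{p_{k,n}\},\{b_{k,n}\},\{x_k\},\{q_k\},\{w_k\}$ the ratio $$\frac{\sum_{n=1}^N \rho(B^n_{SC},p_n,g_n)+\sum_{k=1}^K\sum_{n=1}^N x_k\,\rho(b_{k,n},p_{k,n},g_{k,n})}{\sum_{n=1}^N \frac{p_n}{\xi}+\sum_{n=1}^N\sum_{k=1}^K x_k\frac{p_{k,n}}{\xi}+\sum_{k=1}^K x_k\frac{q_k}{\xi}+P_{\rm c}}$$ subject to C1: $\sum_{n} p_n+\sum_{n}\sum_{k} p_{k,n}+\sum_k q_k\le P^{SC}_{\max}$; C2: $\sum_{n} b_{k,n}+w_k\le x_k W^k_{MC}$ for all $k\in\mathcal{K}$; C3: $\rho(w_k,q_k,h_k)\ge x_k R^k_{MC}$ for all $k\in\mathcal{K}$; C4: $\sum_{n}\rho(B^n_{SC},p_n,g_n)+\sum_k\sum_n x_k\rho(b_{k,n},p_{k,n},g_{k,n})\ge R^{SC}_{\min}$; C5: $x_k\in\{0,1\}$ for all $k$; C6: $b_{k,n}\ge0$, $w_k\ge0$ for all $k,n$; C7: $p_n\ge0$, $p_{k,n}\ge0$, $q_k\ge0$ for all $k,n$. Consider problem (P2): maximize over $\{p_n\},\{p_{k,k'}\},\{b_{k,k'}\},\{x_k\},\{q_k\},\{w_k\}$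 the ratio $$\frac{\sum_{n=1}^N \rho(B^n_{SC},p_n,g_n)+\sum_{k=1}^K x_k\,\rho(b_{k,k'},p_{k,k'},g_{k,k'})}{\sum_{n=1}^N \frac{p_n}{\xi}+\sum_{k=1}^K x_k\frac{p_{k,k'}}{\xi}+\sum_{k=1}^K x_k\frac{q_k}{\xi}+P_{\rm c}}$$ subject to C1: $\sum_n p_n+\sum_k p_{k,k'}+\sum_k q_k\le P^{SC}_{\max}$; C2: $b_{k,k'}+w_k= x_kW^k_{MC}$ for all $k$; C3: $\rho(w_k,q_k,h_k)= x_kR^k_{MC}$ for all $k$; C4: $\sum_n\rho(B^n_{SC},p_n,g_n)+\sum_k x_k\rho(b_{k,k'},p_{k,k'},g_{k,k'})\ge R^{SC}_{\min}$; together with $x_k\in\{0,1\}$, $b_{k,k'}\ge0$, $w_k\ge0$, $p_n\ge0$, $p_{k,k'}\ge0$, $q_k\ge0$. Then the optimal solution of (P1) is equivalent to that of (P2): the optimal values of (P1) and (P2) coincide, and an optimal solution of (P2), extended by setting $b_{k,n}=0$ and $p_{k,n}=0$ for all $n\neq k'$, is an optimal solution of (P1). In particular, at an optimum of (P1) the bandwidth $W^k_{MC}$ of each MU $k$ is shared with at most one SU, namely SU $k'$.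
   Context: Setting: a small cell (SC) base station serves small-cell users (SUs) indexed by $\mathcal{N}=\{1,\dots,N\}$ and may additionally serve macro-cell users (MUs) indexed by $\mathcal{K}=\{1,\dots,K\}$. Given constants: noise spectral density $N_0>0$; power amplifier efficiency $\xi\in(0,1]$; circuit power $P_{\rm c}>0$; maximum transmit power $P^{SC}_{\max}>0$; minimum SC system rate $R^{SC}_{\min}\ge0$. For each MU $k$: licensed bandwidth $W^k_{MC}>0$, minimum rate $R^k_{MC}>0$, channel power gain $h_k>0$ from the SC to MU $k$, and channel power gains $g_{k,n}>0$ from the SC to SU $n$ on MU $k$'s bandwidth. For each SU $n$: licensed bandwidth $B^n_{SC}>0$ and channel power gain $g_n>0$ on it. For $b\ge0$, $p\ge0$, $g>0$ define the rate $\rho(b,p,g)=b\log_2\!\big(1+\frac{pg}{bN_0}\big)$, with $\rho(0,p,g)=0$. Variables: $x_k$ indicates whether MU $k$ is served; $w_k,q_k$ are the bandwidth and power used to serve MU $k$; $b_{k,n},p_{k,n}$ are the bandwidth taken from MU $k$'s band and power used for SU $n$; $p_n$ is the power for SU $n$ on its own band. *)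

From HB Require Import structures.
From mathcomp Require Import all_boot all_order all_algebra.
From mathcomp Require Import all_classical all_reals all_analysis.
Set Implicit Arguments. Unset Strict Implicit. Unset Printing Implicit Defensive.
Import Order.TTheory GRing.Theory Num.Theory.
Local Open Scope ring_scope.
Local Open Scope classical_set_scope.

Record params (R : realType) (N K : nat) := Params {
  N0   : R;
  xi   : R;
  Pc   : R;
  Pmax : R;
  Rmin : R;
  Wmc  : 'I_K -> R;
  Rmc  : 'I_K -> R;
  hk   : 'I_K -> R;
  gkn  : 'I_K -> 'I_N -> R;
  Bsc  : 'I_N -> R;
  gn   : 'I_N -> R
}.

Definition log2 (R : realType) (x : R) : R := ln x / ln 2.

Definition rho (R : realType) (N0 b p g : R) : R :=
  if b == 0 then 0 else b * log2 (1 + p * g / (b * N0)).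

Record var1 (R : realType) (N K : nat) := Var1 {
  p1   : 'I_N -> R;
  pkn1 : 'I_K -> 'I_N -> R;
  bkn1 : 'I_K -> 'I_N -> R;
  x1   : 'I_K -> bool;
  q1   : 'I_K -> R;
  w1   : 'I_K -> R
}.

(* Decision variables of (P2): only p_{k,k'} and b_{k,k'}. *)
Record var2 (R : realType) (K N : nat) := Var2 {
  p2  : 'I_N -> R;
  pk2 : 'I_K -> R;
  bk2 : 'I_K -> R;
  x2  : 'I_K -> bool;
  q2  : 'I_K -> R;
  w2  : 'I_K -> R
}.

Section Problems.
Variables (R : realType) (N K : nat) (P : params R N K).

Definition rate1 (v : var1 R N K) : R :=
  \sum_(n < N) rho (N0 P) (Bsc P n) (p1 v n) (gn P n)
  + \sum_(k < K) \sum_(n < N)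
      (x1 v k)%:R * rho (N0 P) (bkn1 v k n) (pkn1 v k n) (gkn P k n).

Definition power1 (v : var1 R N K) : R :=
  \sum_(n < N) p1 v n / xi P
  + \sum_(n < N) \sum_(k < K) (x1 v k)%:R * (pkn1 v k n / xi P)
  + \sum_(k < K) (x1 v k)%:R * (q1 v k / xi P)
  + Pc P.

Definition EE1 (v : var1 R N K) : R := rate1 v / power1 v.

Definition feasible1 (v : var1 R N K) : Prop :=
  (\sum_(n < N) p1 v n + \sum_(n < N) \sum_(k < K) pkn1 v k n
        + \sum_(k < K) q1 v k <= Pmax P) /\
  (forall k, \sum_(n < N) bkn1 v k n + w1 v k <= (x1 v k)%:R * Wmc P k) /\
  (forall k, (x1 v k)%:R * Rmc P k <= rho (N0 P) (w1 v k) (q1 v k) (hk P k)) /\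
  (Rmin P <= rate1 v) /\
  (forall k n, 0 <= bkn1 v k n) /\ (forall k, 0 <= w1 v k) /\
  (forall n, 0 <= p1 v n) /\ (forall k n, 0 <= pkn1 v k n) /\
  (forall k, 0 <= q1 v k).
(* C5 (x_k in {0,1}) holds by the boolean encoding of x. *)

Definition optimal1 (v : var1 R N K) : Prop :=
  feasible1 v /\ forall v', feasible1 v' -> EE1 v' <= EE1 v.

Variable kp : 'I_K -> 'I_N.

Definition rate2 (v : var2 R K N) : R :=
  \sum_(n < N) rho (N0 P) (Bsc P n) (p2 v n) (gn P n)
  + \sum_(k < K) (x2 v k)%:R * rho (N0 P) (bk2 v k) (pk2 v k) (gkn P k (kp k)).

Definition power2 (v : var2 R K N) : R :=
  \sum_(n < N) p2 v n / xi P
  + \sum_(k < K) (x2 v k)%:R * (pk2 v k / xi P)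
  + \sum_(k < K) (x2 v k)%:R * (q2 v k / xi P)
  + Pc P.

Definition EE2 (v : var2 R K N) : R := rate2 v / power2 v.

Definition feasible2 (v : var2 R K N) : Prop :=
  (\sum_(n < N) p2 v n + \sum_(k < K) pk2 v k + \sum_(k < K) q2 v k <= Pmax P) /\
  (forall k, bk2 v k + w2 v k = (x2 v k)%:R * Wmc P k) /\
  (forall k, rho (N0 P) (w2 v k) (q2 v k) (hk P k) = (x2 v k)%:R * Rmc P k) /\
  (Rmin P <= rate2 v) /\
  (forall k, 0 <= bk2 v k) /\ (forall k, 0 <= w2 v k) /\
  (forall n, 0 <= p2 v n) /\ (forall k, 0 <= pk2 v k) /\ (forall k, 0 <= q2 v k).

Definition optimal2 (v : var2 R K N) : Prop :=
  feasible2 v /\ forall v', feasible2 v' -> EE2 v' <= EE2 v.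

Definition extend (v : var2 R K N) : var1 R N K :=
  Var1 (p2 v)
       (fun k n => if n == kp k then pk2 v k else 0)
       (fun k n => if n == kp k then bk2 v k else 0)
       (x2 v) (q2 v) (w2 v).

(* Optimal values, as suprema in the extended reals (-oo if infeasible). *)
Definition optval1 : \bar R := ereal_sup [set (EE1 v)%:E | v in feasible1].
Definition optval2 : \bar R := ereal_sup [set (EE2 v)%:E | v in feasible2].

End Problems.

(* The rate [rho N0 b p g] is the perspective of the concave map
   [p |-> log2 (1 + p g / N0)], hence superadditive in (bandwidth, power);
   it is also nondecreasing in the bandwidth and in the gain.  So whatever the
   SUs draw from the band of a served MU k is at most what SU k' alone would
   get from the whole leftover band [W_k - w_k] with the pooled power, and
   serving MU k with the least power meeting C3 only saves energy.  Every
   feasible point of (P1) is thus dominated by one of (P2), while (P2) embeds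
   into (P1) with the same efficiency: the optimal values coincide and
   maximizers of (P2) extend to maximizers of (P1). *)

From HB Require Import structures.
From mathcomp Require Import all_boot all_order all_algebra.
From mathcomp Require Import all_classical all_reals all_analysis.
From mathcomp Require Import ring lra.
Set Implicit Arguments. Unset Strict Implicit. Unset Printing Implicit Defensive.
Import Order.TTheory GRing.Theory Num.Theory.
Local Open Scope ring_scope.

Section Rate.
Variables (R : realType) (N0 : R).
Hypothesis N0_gt0 : 0 < N0.

Let ln2_gt0 : 0 < ln (2 : R).
Proof. by apply: ln_gt0; rewrite ltr1n. Qed.

Lemma rho0 (p g : R) : rho N0 0 p g = 0.
Proof. by rewrite /rho eqxx. Qed.

Lemma rhoE (b p g : R) : 0 < b -> rho N0 b p g = b * ln (1 + p * g / (b * N0)) / ln 2.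
Proof. by move=> b_gt0; rewrite /rho gt_eqF // /log2 mulrA. Qed.

Lemma rho_ge0 (b p g : R) : 0 <= b -> 0 <= p * g -> 0 <= rho N0 b p g.
Proof.
rewrite le0r => /predU1P[->|b_gt0] pg_ge0; first by rewrite rho0.
rewrite rhoE // divr_ge0 ?(ltW ln2_gt0) // mulr_ge0 ?(ltW b_gt0) // ln_ge0 // lerDl.
by rewrite divr_ge0 // ltW // mulr_gt0.
Qed.

Lemma ler_rho_snr (b p g p' g' : R) : 0 < b -> 0 <= p * g -> 0 <= p' * g' ->
  (rho N0 b p g <= rho N0 b p' g') = (p * g <= p' * g').
Proof.
move=> b_gt0 pg_ge0 pg'_ge0; have c_gt0 : 0 < (b * N0)^-1 by rewrite invr_gt0 mulr_gt0.
rewrite !rhoE // ler_pM2r ?invr_gt0 // ler_pM2l // ler_ln ?posrE ?lerD2l ?ler_pM2r //.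
  by rewrite ltr_pwDl // mulr_ge0 // ltW.
by rewrite ltr_pwDl // mulr_ge0 // ltW.
Qed.

Lemma rho_le_snr (b p g p' g' : R) :
  0 <= b -> 0 <= p * g -> p * g <= p' * g' -> rho N0 b p g <= rho N0 b p' g'.
Proof.
rewrite le0r => /predU1P[->|b_gt0] pg_ge0 le_pg; first by rewrite !rho0.
by rewrite ler_rho_snr // (le_trans pg_ge0).
Qed.

(* Tangent-line bound for [ln] at the pooled SNR [y]: the weighted deviations
   [b_i (u_i / y - 1)] cancel because [b1 u1 + b2 u2 = (b1 + b2) y]. *)
Lemma rho_superadd (b1 b2 p1 p2 g : R) :
  0 <= b1 -> 0 <= b2 -> 0 <= p1 -> 0 <= p2 -> 0 <= g ->
  rho N0 b1 p1 g + rho N0 b2 p2 g <= rho N0 (b1 + b2) (p1 + p2) g.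
Proof.
rewrite le0r => /predU1P[->|b1_gt0]; rewrite le0r => /predU1P[->|b2_gt0] p1_ge0 p2_ge0 g_ge0.
- by rewrite addr0 !rho0 addr0.
- by rewrite rho0 !add0r rho_le_snr ?(ltW b2_gt0) ?mulr_ge0 // ler_wpM2r // lerDr.
- by rewrite rho0 !addr0 rho_le_snr ?(ltW b1_gt0) ?mulr_ge0 // ler_wpM2r // lerDl.
have b_gt0 : 0 < b1 + b2 by rewrite addr_gt0.
rewrite !rhoE // -mulrDl ler_pM2r ?invr_gt0 //.
set u1 := 1 + _; set u2 := 1 + _; set y := 1 + _.
have snr_gt0 b p : 0 < b -> 0 <= p -> 0 < 1 + p * g / (b * N0).
  by move=> b0 p0; rewrite ltr_pwDl // divr_ge0 ?mulr_ge0 // ltW // mulr_gt0.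
have y_gt0 : 0 < y by rewrite snr_gt0 // addr_ge0.
have tangent u : 0 < u -> ln u <= ln y + (u / y - 1).
  move=> u_gt0; have uy_gt0 := divr_gt0 u_gt0 y_gt0.
  have -> : ln u = ln y + ln (u / y).
    by rewrite -lnM ?posrE // mulrC divfK // lt0r_neq0.
  by rewrite lerD2l; have := @le_ln1Dx R (u / y - 1); rewrite subrKC; apply; lra.
have pooled : b1 * (u1 / y - 1) + b2 * (u2 / y - 1) = 0.
  rewrite /u1 /u2 /y; field.
  rewrite !gt_eqF ?mulr_gt0 //.
  have := mulr_gt0 b_gt0 N0_gt0; have := mulr_ge0 (addr_ge0 p1_ge0 p2_ge0) g_ge0; lra.
have t1 := ler_wpM2l (ltW b1_gt0) (tangent _ (snr_gt0 _ _ b1_gt0 p1_ge0)).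
have t2 := ler_wpM2l (ltW b2_gt0) (tangent _ (snr_gt0 _ _ b2_gt0 p2_ge0)).
rewrite -/u1 -/u2 !mulrDr in t1 t2; rewrite mulrDl; lra.
Qed.

Lemma rho_le_bandwidth (b B p g : R) : 0 <= b -> b <= B -> 0 <= p -> 0 <= g ->
  rho N0 b p g <= rho N0 B p g.
Proof.
move=> b_ge0 le_bB p_ge0 g_ge0; have gap_ge0 : 0 <= B - b by rewrite subr_ge0.
have := rho_superadd b_ge0 gap_ge0 p_ge0 (lexx 0) g_ge0.
rewrite subrKC addr0; apply: le_trans; rewrite lerDl rho_ge0 //.
by rewrite mul0r.
Qed.

Lemma rho_sum_superadd (I : Type) (r : seq I) (b p : I -> R) (g : R) :
  (forall i, 0 <= b i) -> (forall i, 0 <= p i) -> 0 <= g ->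
  \sum_(i <- r) rho N0 (b i) (p i) g <= rho N0 (\sum_(i <- r) b i) (\sum_(i <- r) p i) g.
Proof.
move=> b_ge0 p_ge0 g_ge0; elim: r => [|i r IH]; first by rewrite !big_nil rho0.
rewrite !big_cons; apply: le_trans (rho_superadd _ _ _ _ g_ge0) => //.
- by rewrite lerD2l.
- exact: sumr_ge0.
- exact: sumr_ge0.
Qed.

Lemma rho_sum_le_pooled (I : Type) (r : seq I) (b p g : I -> R) (B G : R) :
  (forall i, 0 <= b i) -> (forall i, 0 <= p i) -> 0 <= G ->
  (forall i, 0 <= g i <= G) -> \sum_(i <- r) b i <= B ->
  \sum_(i <- r) rho N0 (b i) (p i) (g i) <= rho N0 B (\sum_(i <- r) p i) G.
Proof.
move=> b_ge0 p_ge0 G_ge0 g_bnd le_bB.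
apply: le_trans (_ : \sum_(i <- r) rho N0 (b i) (p i) G <= _).
  apply: ler_sum => i _; have /andP[g_ge0 le_gG] := g_bnd i.
  by rewrite rho_le_snr ?mulr_ge0 // ler_wpM2l.
apply: le_trans (rho_sum_superadd _ b_ge0 p_ge0 G_ge0) _.
by rewrite rho_le_bandwidth ?sumr_ge0.
Qed.

Definition min_power (w h r : R) : R := (expR (r * ln 2 / w) - 1) * (w * N0 / h).

Lemma rho_min_power (w h r : R) : 0 < w -> 0 < h -> rho N0 w (min_power w h r) h = r.
Proof.
move=> w_gt0 h_gt0; rewrite rhoE //.
have -> : 1 + min_power w h r * h / (w * N0) = expR (r * ln 2 / w).
  by rewrite /min_power; field; rewrite !gt_eqF.
by rewrite expRK; field; rewrite !gt_eqF.
Qed.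

Lemma min_power_ge0 (w h r : R) : 0 < w -> 0 < h -> 0 <= r -> 0 <= min_power w h r.
Proof.
move=> w_gt0 h_gt0 r_ge0; rewrite /min_power mulr_ge0 //.
  by rewrite subr_ge0 -[X in X <= _]expR0 ler_expR divr_ge0 ?mulr_ge0 // ltW.
by rewrite divr_ge0 ?mulr_ge0 // ltW.
Qed.

Lemma min_power_le (w h q r : R) : 0 < w -> 0 < h -> 0 <= q -> 0 <= r ->
  r <= rho N0 w q h -> min_power w h r <= q.
Proof.
move=> w_gt0 h_gt0 q_ge0 r_ge0; rewrite -{1}(rho_min_power r w_gt0 h_gt0).
by rewrite ler_rho_snr ?ler_pM2r // mulr_ge0 ?min_power_ge0 // ltW.
Qed.

End Rate.

Definition maximizer {R : realType} {T : Type} (F : set T) (f : T -> R) (x : T) : Prop :=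
  F x /\ forall y, F y -> f y <= f x.

Section Reduction.
Variables (R : realType) (T1 T2 : Type) (F1 : set T1) (F2 : set T2).
Variables (f1 : T1 -> R) (f2 : T2 -> R) (e : T2 -> T1).
Hypothesis e_feasible : forall u, F2 u -> F1 (e u).
Hypothesis f1_e : forall u, F2 u -> f1 (e u) = f2 u.
Hypothesis dominated : forall v, F1 v -> exists2 u, F2 u & f1 v <= f2 u.

Lemma ereal_sup_reduction :
  ereal_sup [set (f1 v)%:E | v in F1] = ereal_sup [set (f2 u)%:E | u in F2].
Proof.
apply/eqP; rewrite eq_le; apply/andP; split; apply: ge_ereal_sup.
  move=> _ [v /dominated [u F2u le_vu] <-].
  apply: le_trans (_ : (f2 u)%:E <= _)%E; first by rewrite lee_fin.
  by apply: ereal_sup_ubound; exists u.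
move=> _ [u F2u <-]; rewrite -f1_e //.
by apply: ereal_sup_ubound; exists (e u) => //; exact: e_feasible.
Qed.

Lemma maximizer_reduction u : maximizer F2 f2 u -> maximizer F1 f1 (e u).
Proof.
move=> [F2u u_max]; split=> [|v /dominated [u' F2u' le_vu']]; first exact: e_feasible.
by rewrite f1_e //; apply: le_trans le_vu' (u_max _ F2u').
Qed.

End Reduction.

Section Model.
Variables (R : realType) (N K : nat) (P : params R N K) (kp : 'I_K -> 'I_N).

Lemma rate1_extend v : rate1 P (extend kp v) = rate2 P kp v.
Proof.
rewrite /rate1 /rate2 /=; congr (_ + _); apply: eq_bigr => k _.
by rewrite (big_only1 (kp k)) ?eqxx // => n /negbTE ->; rewrite rho0 mulr0.
Qed.

Lemma power1_extend v : power1 P (extend kp v) = power2 P v.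
Proof.
rewrite /power1 /power2 /= exchange_big; congr (_ + _ + _ + _); apply: eq_bigr => k _.
by rewrite (big_only1 (kp k)) ?eqxx // => n /negbTE ->; rewrite mul0r mulr0.
Qed.

Lemma extend_feasible v : feasible2 P kp v -> feasible1 P (extend kp v).
Proof.
move=> [C1 [C2 [C3 [C4 [b_ge0 [w_ge0 [p_ge0 [pk_ge0 q_ge0]]]]]]]].
have ext_sum k (a : R) : \sum_(n < N) (if n == kp k then a else 0) = a.
  by rewrite -big_mkcond big_pred1_eq.
have ext_ge0 k n (a : R) : 0 <= a -> 0 <= if n == kp k then a else 0 by case: eqP.
rewrite /feasible1 /= rate1_extend exchange_big (eq_bigr _ (fun k _ => ext_sum k (pk2 v k))).
split=> //; split=> [k|]; first by rewrite ext_sum C2.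
split=> [k|]; first by rewrite C3.
by do 5?split=> // *; apply: ext_ge0.
Qed.

Hypotheses (N0_gt0 : 0 < N0 P) (xi_gt0 : 0 < xi P) (Pc_gt0 : 0 < Pc P).
Hypotheses (Rmin_ge0 : 0 <= Rmin P) (Rmc_gt0 : forall k, 0 < Rmc P k).
Hypotheses (hk_gt0 : forall k, 0 < hk P k) (gkn_gt0 : forall k n, 0 < gkn P k n).
Hypothesis gkn_kp : forall k n, gkn P k n <= gkn P k (kp k).

Definition reduce (v : var1 R N K) : var2 R K N :=
  Var2 (p1 v)
       (fun k => if x1 v k then \sum_(n < N) pkn1 v k n else 0)
       (fun k => if x1 v k then Wmc P k - w1 v k else 0)
       (x1 v)
       (fun k => if x1 v k then min_power (N0 P) (w1 v k) (hk P k) (Rmc P k) else 0)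
       (fun k => if x1 v k then w1 v k else 0).

Lemma power2_ge_Pc u : feasible2 P kp u -> Pc P <= power2 P u.
Proof.
case=> _ [_ [_ [_ [_ [_ [p_ge0 [pk_ge0 q_ge0]]]]]]].
have term_ge0 (x : bool) a : 0 <= a -> 0 <= x%:R * (a / xi P).
  by move=> a_ge0; rewrite mulr_ge0 ?divr_ge0 // ltW.
rewrite /power2 lerDr !addr_ge0 ?sumr_ge0 // => i _; rewrite ?term_ge0 //.
by rewrite divr_ge0 // ltW.
Qed.

Section Feasible.
Variable v : var1 R N K.
Hypothesis C1 : \sum_(n < N) p1 v n + \sum_(n < N) \sum_(k < K) pkn1 v k n
  + \sum_(k < K) q1 v k <= Pmax P.
Hypothesis C2 : forall k, \sum_(n < N) bkn1 v k n + w1 v k <= (x1 v k)%:R * Wmc P k.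
Hypothesis C3 : forall k, (x1 v k)%:R * Rmc P k <= rho (N0 P) (w1 v k) (q1 v k) (hk P k).
Hypothesis C4 : Rmin P <= rate1 P v.
Hypotheses (b_ge0 : forall k n, 0 <= bkn1 v k n) (w_ge0 : forall k, 0 <= w1 v k).
Hypotheses (p_ge0 : forall n, 0 <= p1 v n) (pk_ge0 : forall k n, 0 <= pkn1 v k n).
Hypothesis q_ge0 : forall k, 0 <= q1 v k.

Lemma served_bandwidth_gt0 k : x1 v k -> 0 < w1 v k.
Proof.
move=> xk; rewrite lt_def w_ge0 andbT; apply: contraTneq (C3 k) => ->.
by rewrite xk mul1r rho0 -ltNge.
Qed.

Lemma served_min_power_le k :
  x1 v k -> min_power (N0 P) (w1 v k) (hk P k) (Rmc P k) <= q1 v k.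
Proof.
move=> xk; apply: (min_power_le N0_gt0 (served_bandwidth_gt0 xk) (hk_gt0 k) (q_ge0 k) (ltW (Rmc_gt0 k))).
by have := C3 k; rewrite xk mul1r.
Qed.

Lemma rate1_le_reduce : rate1 P v <= rate2 P kp (reduce v).
Proof.
rewrite /rate1 /rate2 lerD2l; apply: ler_sum => k _ /=.
case xk: (x1 v k); last by rewrite mul0r big1 // => n _; rewrite mul0r.
rewrite mul1r; under eq_bigr do rewrite mul1r.
apply: (rho_sum_le_pooled N0_gt0 (b_ge0 k) (pk_ge0 k) (ltW (gkn_gt0 k (kp k)))).
  by move=> n; rewrite gkn_kp andbT ltW.
by have := C2 k; rewrite xk mul1r lerBrDr.
Qed.

Lemma reduce_feasible : feasible2 P kp (reduce v).
Proof.
have sum_pk_ge0 k : 0 <= \sum_(n < N) pkn1 v k n by apply: sumr_ge0.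
split.
  apply: le_trans C1; rewrite /= lerD ?lerD2l //.
    by rewrite exchange_big; apply: ler_sum => k _; case: (x1 v k).
  by apply: ler_sum => k _; case xk: (x1 v k); rewrite ?served_min_power_le.
split=> [k /=|]; first by case: (x1 v k); rewrite ?mul1r ?subrK ?mul0r ?addr0.
split=> [k /=|].
  case xk: (x1 v k); last by rewrite rho0 mul0r.
  by rewrite mul1r rho_min_power ?served_bandwidth_gt0.
split; first exact: le_trans C4 rate1_le_reduce.
split=> [k /=|].
  case xk: (x1 v k) => //; have := C2 k; rewrite xk mul1r.
  have : 0 <= \sum_(n < N) bkn1 v k n by apply: sumr_ge0.
  lra.
split=> [k /=|]; first by case: (x1 v k).
split=> //; split=> [k /=|k /=]; case xk: (x1 v k) => //.
by rewrite min_power_ge0 ?served_bandwidth_gt0 ?ltW.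
Qed.

Lemma power2_reduce_le : power2 P (reduce v) <= power1 P v.
Proof.
rewrite /power1 /power2 exchange_big /= lerD2r lerD ?lerD2l //.
  apply: ler_sum => k _; case: (x1 v k); last by rewrite mul0r big1 // => n _; rewrite mul0r.
  by rewrite mul1r mulr_suml; under eq_bigr do rewrite mul1r.
apply: ler_sum => k _; case xk: (x1 v k); rewrite ?mul0r //.
by rewrite !mul1r ler_pM2r ?invr_gt0 ?served_min_power_le.
Qed.

Lemma EE1_le_reduce : EE1 P v <= EE2 P kp (reduce v).
Proof.
have power2_gt0 := lt_le_trans Pc_gt0 (power2_ge_Pc reduce_feasible).
have power1_gt0 := lt_le_trans power2_gt0 power2_reduce_le.
rewrite /EE1 /EE2 ler_pM ?invr_ge0 ?(ltW power1_gt0) ?rate1_le_reduce //.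
  exact: le_trans Rmin_ge0 C4.
by rewrite lef_pV2 ?posrE ?power2_reduce_le.
Qed.
End Feasible.

Lemma EE1_extend u : EE1 P (extend kp u) = EE2 P kp u.
Proof. by rewrite /EE1 rate1_extend power1_extend. Qed.

Lemma reduce_dominates v :
  feasible1 P v -> exists2 u, feasible2 P kp u & EE1 P v <= EE2 P kp u.
Proof.
case=> C1 [C2 [C3 [C4 [b_ge0 [w_ge0 [p_ge0 [pk_ge0 q_ge0]]]]]]].
by exists (reduce v); [apply: reduce_feasible | apply: EE1_le_reduce].
Qed.
End Model.

Theorem theorem1 (R : realType) (N K : nat) (P : params R N K)
    (kp : 'I_K -> 'I_N) :
  0 < N0 P -> 0 < xi P -> xi P <= 1 -> 0 < Pc P -> 0 < Pmax P ->
  0 <= Rmin P ->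
  (forall k, 0 < Wmc P k) -> (forall k, 0 < Rmc P k) ->
  (forall k, 0 < hk P k) -> (forall k n, 0 < gkn P k n) ->
  (forall n, 0 < Bsc P n) -> (forall n, 0 < gn P n) ->
  (* k' is a maximizer of g_{k,n} over n *)
  (forall k n, gkn P k n <= gkn P k (kp k)) ->
  optval1 P = optval2 P kp /\
  (forall v, optimal2 P kp v -> optimal1 P (extend kp v)).
Proof.
move=> N0_gt0 xi_gt0 _ Pc_gt0 _ Rmin_ge0 _ Rmc_gt0 hk_gt0 gkn_gt0 _ _ gkn_kp.
have EE1_embed u : feasible2 P kp u -> EE1 P (extend kp u) = EE2 P kp u.
  by move=> _; apply: EE1_extend.
have dominated := reduce_dominates N0_gt0 xi_gt0 Pc_gt0 Rmin_ge0 Rmc_gt0 hk_gt0 gkn_gt0 gkn_kp.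
have embed := @extend_feasible _ _ _ P kp.
split; first exact: ereal_sup_reduction embed EE1_embed dominated.
exact: maximizer_reduction embed EE1_embed dominated.
Qed.
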